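(* Let $N\ge1$. Consider elastic $N$-soliton solutions of KPII, each described by the set $\{[e_n,g_n]\}_{n=1}^N$ of distinct index pairs with $e_n<g_n$, where $e_1,\dots,e_N$ are the pivot columns and $g_1,\dots,g_N$ the non-pivot columns of its $N\times 2N$ coefficient matrix $A$ (so $\{e_n\}\sqcup\{g_n\}=\{1,\dots,2N\}$). Then: (i) With the pivots ordered as $e_1<e_2<\dots<e_N$, one has $e_1=1$, $e_N<2N$, and $n\le e_n\le 2n-1$ for each $n=1,\dots,N$; the number of possible choices of the pivot set is the Catalan number $C_N=\frac{(2N)!}{N!\,(N+1)!}$. (ii) For a fixed ordered pivot set $\{e_1<\dots<e_N\}$, the number of possible (unordered) choices of non-pivot indices $\{g_1,\dots,g_N\}$ paired with the pivots such that $e_n<g_n$ for all $n$ is $\prod_{n=1}^N(2n-e_n)$. (iii) The total number of ways of choosing the $N$ distinct pairs $\{[e_n,g_n]\}_{n=1}^N$ (partitioning $\{1,\dots,2N\}$) is $(2N-1)!!$.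
   Context: Setting: $k_1<\dots<k_{2N}$ real, $\theta_m=k_mx+k_m^2y+k_m^3t+\theta_{0m}$, $A$ a real $N\times 2N$ matrix in reduced row-echelon form of rank $N$, all nonzero $N\times N$ minors positive, every column having a nonzero entry and every row having a nonzero entry besides its pivot, and satisfying the duality condition $A(m_1,\dots,m_N)=0\iff A(l_1,\dots,l_N)=0$ for every disjoint partition $\{m_i\}\sqcup\{l_i\}=\{1,\dots,2N\}$ (here $A(m_1,\dots,m_N)$ is the minor on those columns). The $\tau$-function is $\tau=\sum_{m_1<\dots<m_N}A(m_1,\dots,m_N)e^{\theta_{m_1}+\dots+\theta_{m_N}}\prod_{s<r}(k_{m_r}-k_{m_s})$, and $u=2(\log\tau)_{xx}$ solves KPII $(-4u_t+u_{xxx}+6uu_x)_x+3u_{yy}=0$; such $u$ are the elastic $N$-soliton solutions. Each such solution has $N$ asymptotic line solitons as $y\to\pm\infty$ labeled by the pairs $[e_n,g_n]$, i.e. localized near the lines $\theta_{e_n}=\theta_{g_n}$ with amplitude $k_{g_n}-k_{e_n}$ and direction $k_{g_n}+k_{e_n}$. *)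

(* Combinatorics of the index pairs [e_n, g_n] of elastic
   N-soliton solutions of KPII.  Indices 1..2N are represented by the
   ordinals 'I_(N.*2) (ordinal i stands for the index i+1). *)
From mathcomp Require Import all_boot all_order.
Set Implicit Arguments. Unset Strict Implicit. Unset Printing Implicit Defensive.

Definition is_pairing (N : nat) (P : {set 'I_(N.*2) * 'I_(N.*2)}) : bool :=
  [forall p in P, p.1 < p.2] &&
  [forall i : 'I_(N.*2), #|[set p in P | (p.1 == i) || (p.2 == i)]| == 1].

Definition pivots (N : nat) (P : {set 'I_(N.*2) * 'I_(N.*2)}) : {set 'I_(N.*2)} :=
  [set p.1 | p in P].

(* The 1-based values of a set of indices, sorted increasingly:
   nth 0 (pivot_seq E) (n-1) = e_n. *)
Definition pivot_seq (N : nat) (E : {set 'I_(N.*2)}) : seq nat :=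
  sort leq [seq (val i).+1 | i in E].

Fixpoint dfact (n : nat) : nat :=
  match n with
  | 0 => 1
  | 1 => 1
  | (m.+2) as k => k * dfact m
  end.

From mathcomp Require Import all_boot all_order zify.
Set Implicit Arguments. Unset Strict Implicit. Unset Printing Implicit Defensive.

(* Pairing the smallest index with any of
   the other 2k - 1 indices leaves a pairing of 2k - 2 indices, whence (2N - 1)!!.
   For a fixed pivot set E, the largest pivot must be paired with a non-pivot above
   it, and removing that pair does not change, for the smaller pivots e, the number
   [choices] of non-pivots above e minus pivots above e; so the pairings with pivot
   set E number the product of these quantities, which is 2n - e_n at the n-th
   pivot.  Hence E is a pivot set iff e_n <= 2n - 1 for all n.  Removing the
   smallest index shows that such sets satisfy the ballot recursion, whose value
   at (2N, N) is C(2N, N) - C(2N, N - 1), the Catalan number. *)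

Lemma card_sum_indicator (T : finType) (A : {set T}) (f : pred T) :
  #|[set x in A | f x]| = \sum_(x in A) f x.
Proof.
rewrite -sum1_card [LHS]big_mkcond [RHS]big_mkcond; apply: eq_bigr => x _.
by rewrite inE; case: (x \in A); case: (f x).
Qed.

Lemma card_unique_rel (T U : finType) (A : {set T}) (C : {set U}) (R : T -> U -> bool) :
  {in A, forall x, #|[set c in C | R x c]| = 1} ->
  #|A| = \sum_(c in C) #|[set x in A | R x c]|.
Proof.
move=> R1; rewrite -sum1_card (eq_bigr (fun x => \sum_(c in C) R x c)); last first.
  by move=> x xA; rewrite -card_sum_indicator R1.
by rewrite exchange_big; apply: eq_bigr => c _; rewrite card_sum_indicator.
Qed.

Lemma cardsD1D1 (T : finType) (S : {set T}) x y : x \in S -> y \in S -> x != y ->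
  #|S :\ x :\ y| = #|S| - 2.
Proof.
move=> xS yS xy; rewrite [#|S|](cardsD1 x) [#|S :\ x|](cardsD1 y) !inE xS yS eq_sym xy.
by rewrite add1n addSn subn2.
Qed.

Lemma ord_set_min M (S : {set 'I_M}) : S != set0 ->
  exists2 m, m \in S & {in S, forall x : 'I_M, m <= x}.
Proof. by case/set0Pn => x0 x0S; case: (arg_minnP val x0S) => m; exists m. Qed.

Lemma ord_set_max M (S : {set 'I_M}) : S != set0 ->
  exists2 m, m \in S & {in S, forall x : 'I_M, x <= m}.
Proof. by case/set0Pn => x0 x0S; case: (arg_maxnP val x0S) => m; exists m. Qed.

Lemma count_ltn_iota a n : count (ltn a) (iota 0 n) = n - a.+1.
Proof.
elim: n => [|n IHn] //; rewrite -addn1 iotaD count_cat IHn /= addn0 add0n.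
by case: (ltnP a n) => /= ?; lia.
Qed.

Lemma card_ord_gt n (a : nat) : #|[set i : 'I_n | a < i]| = n - a.+1.
Proof.
rewrite -count_ltn_iota -val_enum_ord count_map -sum1_count big_enum_cond /=.
by rewrite sum1dep_card.
Qed.

Lemma count_image (T : finType) (A : {set T}) (f : T -> nat) (P : pred nat) :
  count P (image f A) = #|[set x in A | P (f x)]|.
Proof. by rewrite count_map -sum1_count big_enum_cond /= sum1dep_card. Qed.

Lemma count_gt_nth_sorted (s : seq nat) i : sorted ltn s -> i < size s ->
  count (ltn (nth 0 s i)) s = size s - i.+1.
Proof.
move=> s_lt i_lt; have s_le : sorted leq s by apply: sub_sorted s_lt => ? ? /ltnW.
rewrite -{2}(mkseq_nth 0 s) /mkseq count_map -count_ltn_iota.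
apply: eq_in_count => j; rewrite mem_iota add0n /= => j_lt.
case: (ltnP i j) => [ij|ji]; first by apply: (sorted_ltn_nth ltn_trans 0 s_lt); rewrite ?inE.
by apply/negbTE; rewrite -leqNgt; apply: (sorted_leq_nth leq_trans leqnn 0 s_le); rewrite ?inE.
Qed.

Lemma sorted_ltn_nth_add (s : seq nat) i : sorted ltn s -> i < size s ->
  nth 0 s 0 + i <= nth 0 s i.
Proof.
move=> s_lt; elim: i => [|i IHi] lt_i; first by rewrite addn0.
have : nth 0 s i < nth 0 s i.+1 by apply: (sorted_ltn_nth ltn_trans 0 s_lt); rewrite ?inE // ltnW.
by have := IHi (ltnW lt_i); lia.
Qed.

Lemma card_setIdU1 (T : finType) (f : pred T) x (A : {set T}) : x \notin A ->
  #|[set y in x |: A | f y]| = f x + #|[set y in A | f y]|.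
Proof.
move=> xA; rewrite (cardsD1 x) !inE eqxx /=; congr (_ + _); apply: eq_card => y.
by rewrite !inE; case: eqVneq => //= ->; rewrite (negbTE xA).
Qed.

Lemma dfact_odd k : dfact k.*2.+1 = k.*2.+1 * dfact (k.*2 - 1).
Proof. by case: k => [|k] //=; rewrite subn1. Qed.

(* [ballot n a] counts the ways of choosing [a] pivots among [n] ordered indices
   so that every pivot has more non-pivots than pivots above it; the recursion
   decides whether the smallest index is a pivot. *)
Fixpoint ballot n a : nat :=
  if n is n'.+1 then
    ballot n' a + (if a is a'.+1 then (a' < n' - a') * ballot n' a' else 0)
  else a == 0.

Lemma ballot_eq0 n a : n < a.*2 -> ballot n a = 0.
Proof.
elim: n a => [|n IHn] [|a] //= lt_na; rewrite IHn; last by lia.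
by have -> : (a < n - a) = false by lia.
Qed.

Lemma ballot_binomial n a : a.*2 <= n ->
  ballot n a + (if a is a'.+1 then 'C(n, a') else 0) = 'C(n, a).
Proof.
elim: n a => [|n IHn] [|a] //= le_an.
  by rewrite !addn0 bin0 -[RHS](bin0 n) -(IHn 0) ?addn0.
have -> : (a < n - a) = true by lia.
have binSa : 'C(n.+1, a) = 'C(n, a) + (if a is a'.+1 then 'C(n, a') else 0).
  by case: (a) => [|a']; rewrite ?bin0 ?binS.
move: (IHn a (ltnW le_an)); rewrite mul1n binS binSa.
move: (if a is a'.+1 then _ else _) => c IHa {binSa}.
have [le_a1n|lt_na1] := leqP (a.+1).*2 n.
  by have := IHn a.+1 le_a1n; clear IHn; lia.
have bin_sym : 'C(n, a.+1) = 'C(n, a).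
  rewrite -(bin_sub (_ : a <= n)); last by lia.
  by congr 'C(_, _); lia.
by rewrite ballot_eq0 // bin_sym; clear IHn; lia.
Qed.

Lemma ballot_catalan N : 0 < N -> ballot N.*2 N = N.*2`! %/ (N`! * N.+1`!).
Proof.
case: N => [|k] // _; set N := k.+1.
have leN : N <= N.*2 by rewrite -addnn leq_addr.
have c1T := bin_fact leN; have c0T := bin_fact (ltnW leN).
rewrite (_ : N.*2 - N = N) in c1T; last by lia.
rewrite (_ : N.*2 - k = N.+1) in c0T; last by lia.
have c1E : ballot N.*2 N + 'C(N.*2, k) = 'C(N.*2, N) := ballot_binomial (leqnn _).
rewrite (factS N) (factS k) in c0T c1T *.
move: (ballot _ _) ('C(_, k)) ('C(_, N)) (N.*2`!) (fact_gt0 k) c1E c0T c1T.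
move=> B c0 c1 T f_gt0 c1E c0T c1T.
have -> : T = B * (N * k`! * (N.+1 * (N * k`!))) by nia.
by rewrite mulnK // !muln_gt0 f_gt0.
Qed.

Section Matchings.

Variable M : nat.
Implicit Types (S E : {set 'I_M}) (P Q : {set 'I_M * 'I_M}).

Definition covers (p : 'I_M * 'I_M) (i : 'I_M) : bool := (p.1 == i) || (p.2 == i).

Definition is_matching S P : bool :=
  [forall p in P, p.1 < p.2] && [forall i, #|[set p in P | covers p i]| == (i \in S)].

Definition pivot_set P : {set 'I_M} := [set p.1 | p in P].

Lemma mem_setD1D1_covers S e c i : e \in S -> c \in S -> e != c ->
  (i \in S) = covers (e, c) i + (i \in S :\ e :\ c) :> nat.
Proof.
move=> eS cS ec; rewrite /covers !inE /=.
case: (eqVneq e i) => [<-|ei]; first by rewrite eS (negbTE ec).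
by case: (eqVneq c i) => [<-|ci]; rewrite ?cS // eq_sym ei eq_sym ci.
Qed.

Section OneMatching.

Variables (S : {set 'I_M}) (P : {set 'I_M * 'I_M}).
Hypothesis matchSP : is_matching S P.

Lemma matching_lt p : p \in P -> p.1 < p.2.
Proof. by case/andP: matchSP => /forall_inP lt _; apply: lt. Qed.

Lemma matching_card i : #|[set p in P | covers p i]| = (i \in S).
Proof. by case/andP: matchSP => _ /forallP /(_ i) /eqP. Qed.

Lemma matching_uniq i p q : p \in P -> q \in P -> covers p i -> covers q i -> p = q.
Proof.
move=> pP qP pi qi; have /card_le1_eqP : #|[set p in P | covers p i]| <= 1.
  by rewrite matching_card leq_b1.
by apply; rewrite inE ?pP ?qP.
Qed.

Lemma matching_coverP i : reflect (exists2 p, p \in P & covers p i) (i \in S).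
Proof.
have -> : (i \in S) = (0 < #|[set p in P | covers p i]|).
  by rewrite matching_card; case: (i \in S).
apply: (iffP card_gt0P) => [[p]|[p pP pi]]; last by exists p; rewrite inE pP.
by rewrite inE => /andP[pP pi]; exists p.
Qed.

Lemma matching_pair e c : (e, c) \in P -> [/\ e \in S, c \in S & e < c].
Proof.
move=> ecP; split; last exact: (matching_lt ecP).
  by apply/matching_coverP; exists (e, c); rewrite // /covers eqxx.
by apply/matching_coverP; exists (e, c); rewrite // /covers eqxx orbT.
Qed.

Lemma pivot_set_sub : pivot_set P \subset S.
Proof. by apply/subsetP => _ /imsetP[[e c] /matching_pair[eS _ _] ->]. Qed.

Lemma card_pivot_set : #|S| = (#|pivot_set P|).*2.
Proof.
have cover1 : {in S, forall i, #|[set p in P | covers p i]| = 1}.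
  by move=> i iS; rewrite matching_card iS.
rewrite (card_unique_rel cover1) (eq_bigr (fun _ => 2)); last first.
  move=> [e c] /matching_pair[eS cS ec].
  have -> : [set i in S | covers (e, c) i] = [set e; c].
    apply/setP => i; rewrite !inE /covers /= ![i == _]eq_sym.
    by apply: andb_idl => /orP[] /eqP <-.
  by rewrite (@cards2 'I_M) neq_ltn ec.
rewrite sum_nat_const card_in_imset ?muln2 // => p q pP qP /= pq.
by apply: (matching_uniq (i := p.1)); rewrite // /covers ?pq eqxx.
Qed.

Lemma matching_setD1 e c : (e, c) \in P -> is_matching (S :\ e :\ c) (P :\ (e, c)).
Proof.
move=> ecP; have [eS cS ec] := matching_pair ecP.
apply/andP; split.
  by apply/forall_inP => p; rewrite inE => /andP[_ /matching_lt].
apply/forallP => i; apply/eqP/(@addnI (covers (e, c) i)).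
rewrite -mem_setD1D1_covers ?neq_ltn ?ec // -matching_card -[in RHS](setD1K ecP).
by rewrite card_setIdU1 // setD11.
Qed.

End OneMatching.

Lemma matching_setD1D1_notin S Q e c : is_matching (S :\ e :\ c) Q -> (e, c) \notin Q.
Proof. by move=> matchQ; apply/negP => /(matching_pair matchQ)[]; rewrite !inE eqxx andbF. Qed.

Lemma matching_setU1 S Q e c : is_matching (S :\ e :\ c) Q ->
  e \in S -> c \in S -> e < c -> is_matching S ((e, c) |: Q).
Proof.
move=> matchQ eS cS ec; have ecQ := matching_setD1D1_notin matchQ.
apply/andP; split.
  by apply/forall_inP => p; rewrite !inE => /orP[/eqP->|/(matching_lt matchQ)].
apply/forallP => i; apply/eqP.
by rewrite card_setIdU1 // (matching_card matchQ) (mem_setD1D1_covers i eS cS) ?neq_ltn ?ec.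
Qed.

Lemma matching_set0 P : is_matching set0 P = (P == set0).
Proof.
apply/idP/eqP => [matchP|->].
  apply/setP => -[x y]; rewrite inE; apply/negbTE/negP.
  by move=> /(matching_pair matchP)[]; rewrite inE.
apply/andP; split; first by apply/forall_inP => p; rewrite inE.
apply/forallP => i; rewrite inE; apply/eqP/eqP; rewrite cards_eq0.
by apply/eqP/setP => p; rewrite !inE.
Qed.

Lemma card_matchings_with_pair S e c (Phi Phi' : pred {set 'I_M * 'I_M}) :
  e \in S -> c \in S -> e < c ->
  (forall Q, is_matching (S :\ e :\ c) Q -> Phi ((e, c) |: Q) = Phi' Q) ->
  #|[set P | [&& is_matching S P, Phi P & (e, c) \in P]]| =
  #|[set Q | is_matching (S :\ e :\ c) Q & Phi' Q]|.
Proof.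
move=> eS cS ec PhiE.
rewrite -[RHS](card_in_imset (f := fun Q => (e, c) |: Q)); last first.
  move=> Q1 Q2; rewrite !inE => /andP[/matching_setD1D1_notin Q1ec _].
  move=> /andP[/matching_setD1D1_notin Q2ec _] /(congr1 (fun Q => Q :\ (e, c))) /=.
  by rewrite !setU1K.
apply: eq_card => P; rewrite inE; apply/and3P/imsetP => [[matchP PhiP ecP]|[Q]].
  exists (P :\ (e, c)); last by rewrite setD1K.
  by rewrite inE matching_setD1 //= -PhiE ?setD1K // matching_setD1.
rewrite inE => /andP[matchQ PhiQ] ->.
by split; [exact: matching_setU1 | rewrite PhiE | exact: setU11].
Qed.

Lemma card_matchings_by_partner S e (Phi : pred {set 'I_M * 'I_M})
    (Phi' : 'I_M -> pred {set 'I_M * 'I_M}) :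
  e \in S ->
  (forall P, is_matching S P -> Phi P -> exists c, (e, c) \in P) ->
  (forall c Q, c \in S -> e < c -> is_matching (S :\ e :\ c) Q -> Phi ((e, c) |: Q) = Phi' c Q) ->
  #|[set P | is_matching S P & Phi P]| =
    \sum_(c in [set c in S | e < c]) #|[set Q | is_matching (S :\ e :\ c) Q & Phi' c Q]|.
Proof.
move=> eS partner PhiE.
rewrite (card_unique_rel (C := [set c in S | e < c]) (R := fun P c => (e, c) \in P)).
  apply: eq_bigr => c; rewrite inE => /andP[cS ec].
  rewrite -(card_matchings_with_pair eS cS ec (fun Q => PhiE c Q cS ec)).
  by apply: eq_card => P; rewrite !inE andbA.
move=> P; rewrite inE => /andP[matchP PhiP]; have [c ecP] := partner P matchP PhiP.
have [_ cS ec] := matching_pair matchP ecP.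
apply/eqP/cards1P; exists c; apply/setP => d; rewrite !inE.
apply/andP/eqP => [[_ edP]|->]; last by rewrite cS ec.
by have := matching_uniq matchP (i := e) edP ecP; rewrite /covers !eqxx => /(_ isT isT) [].
Qed.

Lemma card_matchings S k : #|S| = k.*2 -> #|[set P | is_matching S P]| = dfact (k.*2 - 1).
Proof.
elim: k S => [|k IHk] S cardS.
  rewrite (cards0_eq cardS); apply/eqP/cards1P; exists set0.
  by apply/setP => P; rewrite !inE matching_set0.
have [m mS m_min] : exists2 m, m \in S & {in S, forall x : 'I_M, m <= x}.
  by apply: ord_set_min; rewrite -card_gt0 cardS.
have above_m : [set c in S | m < c] = S :\ m.
  apply/setP => c; rewrite !inE; case cS: (c \in S); rewrite ?andbF //=.
  by rewrite andbT ltn_neqAle m_min // andbT eq_sym.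
transitivity #|[set P : {set 'I_M * 'I_M} | is_matching S P & xpredT P]|.
  by apply: eq_card => P; rewrite !inE andbT.
rewrite (card_matchings_by_partner (Phi' := fun _ => xpredT) mS) //; last first.
  move=> P matchP _; have /(matching_coverP matchP)[[x y] xyP] := mS.
  rewrite /covers /= => /orP[/eqP xm|/eqP ym]; first by exists y; rewrite -xm.
  have [xS _] := matching_pair matchP xyP; rewrite ym => xm.
  by have := m_min x xS; rewrite leqNgt xm.
rewrite (eq_bigr (fun _ => dfact (k.*2 - 1))) => [|c]; last first.
  rewrite inE => /andP[cS mc]; rewrite -(IHk (S :\ m :\ c)).
    by apply: eq_card => Q; rewrite !inE andbT.
  by rewrite cardsD1D1 ?cardS ?neq_ltn ?mc // doubleS subn2.
rewrite sum_nat_const above_m.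
have := cardsD1 m S; rewrite mS cardS doubleS add1n => -[<-].
by rewrite dfact_odd subn1.
Qed.

(* Pivots are paired from the largest one down: each pivot above [e] then takes
   a non-pivot above [e], so [e] is left with [choices S E e] possible partners. *)
Definition choices S E (e : 'I_M) : nat :=
  #|[set c in S :\: E | e < c]| - #|[set x in E | e < x]|.

Lemma choices_setD1D1 S E (e c x : 'I_M) : e \in E -> c \in S -> c \notin E -> x < e -> e < c ->
  choices (S :\ e :\ c) (E :\ e) x = choices S E x.
Proof.
move=> eE cS cE xe ec; rewrite /choices.
rewrite [#|[set y in S :\: E | _]|](cardsD1 c) [#|[set y in E | _]|](cardsD1 e).
rewrite !inE cS cE eE xe (ltn_trans xe ec) subnDl.
congr (_ - _); apply: eq_card => y; rewrite !inE;
  case: (eqVneq y e) => [->|_]; rewrite ?eE ?andbF //=.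
by case: (y \in E); case: (y \in S); case: (y != c).
Qed.

Lemma choices_setD1 S E (m e : 'I_M) : m <= e -> choices (S :\ m) (E :\ m) e = choices S E e.
Proof.
move=> me; rewrite /choices; congr (_ - _); apply: eq_card => c; rewrite !inE.
  by case: (eqVneq c m) => [->|cm]; rewrite ?eqxx ?cm //= ltnNge me !andbF.
by case: (eqVneq c m) => [->|cm]; rewrite ?eqxx ?cm //= ltnNge me !andbF.
Qed.

Lemma card_matchings_pivots S E k : E \subset S -> #|E| = k -> #|S| = k.*2 ->
  #|[set P | is_matching S P & pivot_set P == E]| = \prod_(e in E) choices S E e.
Proof.
elim: k S E => [|k IHk] S E ES cardE cardS.
  rewrite (cards0_eq cardE) (cards0_eq cardS) big_set0; apply/eqP/cards1P; exists set0.
  apply/setP => P; rewrite !inE matching_set0; apply: andb_idr => /eqP ->.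
  by rewrite /pivot_set imset0.
have [e eE e_max] : exists2 e, e \in E & {in E, forall x : 'I_M, x <= e}.
  by apply: ord_set_max; rewrite -card_gt0 cardE.
have eS := subsetP ES e eE.
have above_e (c : 'I_M) : e < c -> c \notin E by move=> ec; apply/negP => /e_max; rewrite leqNgt ec.
rewrite (bigD1 e eE) /=.
rewrite (card_matchings_by_partner (Phi' := fun _ Q => pivot_set Q == E :\ e) eS); first last.
- move=> c Q cS ec matchQ; rewrite /pivot_set imsetU1 -/(pivot_set Q).
  have eQ : e \notin pivot_set Q.
    by apply/negP => /(subsetP (pivot_set_sub matchQ)); rewrite !inE eqxx andbF.
  by apply/eqP/eqP => [<-|->]; [rewrite setU1K | rewrite setD1K].
- move=> P _ /eqP PE; have : e \in pivot_set P by rewrite PE.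
  by case/imsetP => -[x c] xcP /= ->; exists c.
rewrite (eq_bigr (fun _ => \prod_(x in E | x != e) choices S E x)) => [|c].
  rewrite sum_nat_const; congr (_ * _); rewrite /choices.
  have -> : [set x in E | e < x] = set0.
    by apply/setP => x; rewrite !inE; case xE: (x \in E); rewrite //= ltnNge e_max.
  rewrite cards0 subn0; apply: eq_card => c; rewrite !inE.
  by case ec: (e < c); rewrite ?andbF // (above_e c ec).
rewrite inE => /andP[cS ec]; have cE := above_e c ec.
rewrite (IHk (S :\ e :\ c) (E :\ e)).
- apply: eq_big => x; first by rewrite !inE andbC.
  rewrite !inE => /andP[xe xE]; apply: choices_setD1D1 => //.
  by rewrite ltn_neqAle e_max // andbT; apply: contra xe => /eqP/val_inj ->.
- apply/subsetP => x; rewrite !inE => /andP[-> xE]; rewrite (subsetP ES x xE) !andbT.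
  by apply: contraNneq cE => <-.
- by have := cardsD1 e E; rewrite eE cardE add1n => -[].
- by rewrite cardsD1D1 ?cardS ?neq_ltn ?ec // doubleS subn2.
Qed.

Definition admissible S E : bool := [forall e in E, 0 < choices S E e].

Definition admissible_sets S (a : nat) : {set {set 'I_M}} :=
  [set E : {set 'I_M} | [&& E \subset S, #|E| == a & admissible S E]].

Lemma pivot_set_matchingP S E k : #|S| = k.*2 ->
  reflect (exists2 P, is_matching S P & pivot_set P = E) (E \in admissible_sets S k).
Proof.
move=> cardS; rewrite inE.
have matchings_gt0 : E \subset S -> #|E| = k ->
    (0 < #|[set P | is_matching S P & pivot_set P == E]|) = admissible S E.
  move=> ES cardE; rewrite (card_matchings_pivots ES cardE cardS).
  by apply/idP/forall_inP => [/gt0_prodn|/prodn_cond_gt0].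
apply: (iffP idP) => [/and3P[ES /eqP cardE adm]|[P matchP PE]].
  move: adm; rewrite -matchings_gt0 // => /card_gt0P[P].
  by rewrite inE => /andP[matchP /eqP PE]; exists P.
have ES : E \subset S by rewrite -PE pivot_set_sub.
have cardE : #|E| = k by apply: double_inj; rewrite -PE -(card_pivot_set matchP).
rewrite ES cardE eqxx -matchings_gt0 //.
by apply/card_gt0P; exists P; rewrite inE matchP PE eqxx.
Qed.

Section MinimumRemoval.

Variables (S : {set 'I_M}) (m : 'I_M).
Hypotheses (mS : m \in S) (m_min : {in S, forall x : 'I_M, m <= x}).

Lemma admissible_setD1_min E : E \subset S :\ m -> admissible (S :\ m) E = admissible S E.
Proof.
move=> ESm; have EmE : E :\ m = E.
  apply/setP => x; rewrite !inE andb_idl // => xE.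
  by have := subsetP ESm x xE; rewrite !inE => /andP[].
apply: eq_forallb_in => e eE; rewrite -[in LHS]EmE choices_setD1 // m_min //.
by have := subsetP ESm e eE; rewrite !inE => /andP[].
Qed.

Lemma choices_min E : E \subset S :\ m -> choices S (m |: E) m = #|S :\ m| - #|E| - #|E|.
Proof.
move=> ESm; rewrite /choices.
have -> : [set c in S :\: (m |: E) | m < c] = (S :\ m) :\: E.
  apply/setP => c; rewrite !inE negb_or; case cS: (c \in S); rewrite ?andbF //=.
  by rewrite !andbT ltn_neqAle m_min // andbT eq_sym; case: (m != c); rewrite ?andbF ?andbT.
have -> : [set x in m |: E | m < x] = E.
  apply/setP => c; rewrite !inE; case: (eqVneq c m) => [->|cm] /=.
    by rewrite ltnn; apply/esym/negP => /(subsetP ESm); rewrite !inE eqxx.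
  apply: andb_idr => /(subsetP ESm); rewrite !inE => /andP[_ cS].
  by rewrite ltn_neqAle m_min // andbT eq_sym.
by rewrite (cardsDS ESm).
Qed.

Lemma admissible_setU1_min E : E \subset S :\ m ->
  admissible S (m |: E) = (#|E| < #|S :\ m| - #|E|) && admissible (S :\ m) E.
Proof.
move=> ESm; have mE : m \notin E by apply/negP => /(subsetP ESm); rewrite !inE eqxx.
have m_le e : e \in E -> m <= e by move/(subsetP ESm); rewrite !inE => /andP[_ /m_min].
apply/forall_inP/andP => [adm|[m_ok /forall_inP adm] e].
  split; first by have := adm m (setU11 _ _); rewrite choices_min // subn_gt0.
  apply/forall_inP => e eE; rewrite -(setU1K mE) choices_setD1 ?m_le //.
  by apply: adm; rewrite !inE eE orbT.
rewrite !inE => /orP[/eqP->|eE]; first by rewrite choices_min // subn_gt0.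
by rewrite -(choices_setD1 S _ (m_le e eE)) setU1K ?adm.
Qed.

Lemma admissible_sets_setD1_min a :
  admissible_sets S a :\: [set E : {set 'I_M} | m \in E] = admissible_sets (S :\ m) a.
Proof.
apply/setP => E; rewrite !inE subsetD1.
case mE: (m \in E); rewrite ?andbF //= andbT.
by case ES: (E \subset S) => //=; rewrite admissible_setD1_min // subsetD1 ES mE.
Qed.

Lemma admissible_sets_setI_min a :
  admissible_sets S a.+1 :&: [set E : {set 'I_M} | m \in E] =
  [set m |: E | E in [set E in admissible_sets (S :\ m) a | a < #|S :\ m| - a]].
Proof.
apply/setP => E; rewrite inE; apply/andP/imsetP => [[]|[E']].
  rewrite !inE => /and3P[ES /eqP cardE admE] mE; exists (E :\ m); last by rewrite setD1K.
  have ESm : E :\ m \subset S :\ m by apply: setSD.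
  have cardEm : #|E :\ m| = a by have := cardsD1 m E; rewrite mE cardE => -[].
  rewrite -(setD1K mE) admissible_setU1_min // cardEm in admE.
  by case/andP: admE => lt_a adm; rewrite !inE ESm cardEm eqxx adm lt_a.
rewrite !inE => /andP[/and3P[ESm /eqP cardE' adm'] lt_a] ->.
have mE' : m \notin E' by apply/negP => /(subsetP ESm); rewrite !inE eqxx.
rewrite admissible_setU1_min // cardsU1 mE' cardE' lt_a adm' setU11 eqxx !andbT.
split=> //; apply/subsetP => x; rewrite !inE => /orP[/eqP -> //|/(subsetP ESm)].
by rewrite !inE => /andP[].
Qed.

End MinimumRemoval.

Lemma card_admissible_sets S n a : #|S| = n -> #|admissible_sets S a| = ballot n a.
Proof.
elim: n S a => [|n IHn] S a cardS.
  rewrite (cards0_eq cardS); case: a => [|a] /=.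
    apply/eqP/cards1P; exists set0; apply/setP => E; rewrite !inE subset0.
    apply/andP/eqP => [[/eqP //]|->]; rewrite cards0; split=> //.
    by apply/forall_inP => e; rewrite inE.
  apply/eqP; rewrite cards_eq0; apply/eqP/setP => E; rewrite !inE subset0.
  by apply/negP => /andP[/eqP ->]; rewrite cards0.
have [m mS m_min] : exists2 m, m \in S & {in S, forall x : 'I_M, m <= x}.
  by apply: ord_set_min; rewrite -card_gt0 cardS.
have cardSm : #|S :\ m| = n by have := cardsD1 m S; rewrite mS cardS add1n => -[].
rewrite /= -(cardsID [set E : {set 'I_M} | m \in E]) addnC admissible_sets_setD1_min // IHn //.
congr (_ + _); case: a => [|a].
  apply/eqP; rewrite cards_eq0; apply/eqP/setP => E; rewrite !inE.
  by apply/negP => /andP[/and3P[_ /eqP/cards0_eq -> _]]; rewrite inE.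
rewrite admissible_sets_setI_min // card_in_imset; last first.
  move=> E1 E2; rewrite !inE => /andP[/and3P[E1S _ _] _] /andP[/and3P[E2S _ _] _].
  have notin E : E \subset S :\ m -> m \notin E.
    by move=> ESm; apply/negP => /(subsetP ESm); rewrite !inE eqxx.
  by move=> /(congr1 (fun E => E :\ m)); rewrite !setU1K ?notin.
rewrite -(IHn (S :\ m) a cardSm) cardSm.
case: (a < n - a); rewrite ?mul1n ?mul0n.
  by apply: eq_card => E; rewrite !inE andbT.
by apply/eqP; rewrite cards_eq0; apply/eqP/setP => E; rewrite !inE andbF.
Qed.

End Matchings.

Section PivotSequence.

Variables (N : nat) (E : {set 'I_(N.*2)}).
Hypothesis cardE : #|E| = N.
Local Notation s := (pivot_seq E).

Lemma size_pivot_seq : size s = N.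
Proof. by rewrite size_sort size_image cardE. Qed.

Lemma sorted_pivot_seq : sorted ltn s.
Proof.
rewrite ltn_sorted_uniq_leq sort_uniq sort_sorted ?andbT; last exact: leq_total.
by rewrite map_inj_uniq ?enum_uniq // => x y /= [] /val_inj.
Qed.

Lemma pivot_seqP u : u \in s -> exists2 e, e \in E & u = (val e).+1.
Proof. by rewrite mem_sort => /mapP[e]; rewrite mem_enum; exists e. Qed.

Lemma choices_setT (e : 'I_(N.*2)) :
  choices [set: 'I_(N.*2)] E e = N.*2 - (val e).+1 - (count (ltn (val e).+1) s).*2.
Proof.
rewrite count_sort count_image /choices.
have -> : [set c in [set: 'I_(N.*2)] :\: E | e < c] =
          [set c : 'I_(N.*2) | e < c] :\: [set x in E | e < x].
  apply/setP => c; rewrite !inE.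
  by case: (c \in E); case: (e < c).
rewrite cardsDS ?card_ord_gt; first by rewrite -subnDA addnn.
by apply/subsetP => x; rewrite !inE => /andP[].
Qed.

Lemma prod_choices_pivot_seq :
  \prod_(e in E) choices [set: 'I_(N.*2)] E e = \prod_(1 <= n < N.+1) (n.*2 - nth 0 s n.-1).
Proof.
pose gap u := N.*2 - u - (count (ltn u) s).*2.
rewrite (eq_bigr (fun e : 'I_(N.*2) => gap (val e).+1)) => [|e _]; last exact: choices_setT.
rewrite -(big_image _ _ (fun e : 'I_(N.*2) => (val e).+1) (mem E) gap).
rewrite -(perm_big _ (permEl (perm_sort leq _))) [LHS](big_nth 0) size_pivot_seq big_add1 /=.
apply: eq_big_nat => i /andP[_ i_lt]; rewrite /gap -/(pivot_seq E).
have i_size : i < size s by rewrite size_pivot_seq.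
rewrite count_gt_nth_sorted ?sorted_pivot_seq // size_pivot_seq.
have [e _ ->] := pivot_seqP (mem_nth 0 i_size); have := ltn_ord e; lia.
Qed.

Lemma pivot_seq_bounds : admissible [set: 'I_(N.*2)] E ->
  forall n, 1 <= n <= N -> n <= nth 0 s n.-1 <= n.*2 - 1.
Proof.
move=> adm n /andP[n_gt0 n_le]; have i_lt : n.-1 < size s by rewrite size_pivot_seq; lia.
apply/andP; split.
  have [e0 _ e0_def] := pivot_seqP (mem_nth 0 (leq_ltn_trans (leq0n _) i_lt)).
  by have := sorted_ltn_nth_add sorted_pivot_seq i_lt; rewrite e0_def; lia.
have [e eE e_def] := pivot_seqP (mem_nth 0 i_lt).
have := forall_inP adm e eE; rewrite choices_setT -e_def.
rewrite count_gt_nth_sorted ?sorted_pivot_seq // size_pivot_seq.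
by move: (nth 0 s n.-1) => x; lia.
Qed.

End PivotSequence.

Lemma is_pairingE N (P : {set 'I_(N.*2) * 'I_(N.*2)}) :
  is_pairing P = is_matching [set: 'I_(N.*2)] P.
Proof. by congr (_ && _); apply: eq_forallb => i; rewrite in_setT. Qed.

Lemma pivots_pairings N :
  [set pivots P | P in [set P : {set 'I_(N.*2) * 'I_(N.*2)} | is_pairing P]] =
  admissible_sets [set: 'I_(N.*2)] N.
Proof.
have cardT : #|[set: 'I_(N.*2)]| = N.*2 by rewrite cardsT card_ord.
apply/setP => E; apply/imsetP/(pivot_set_matchingP _ cardT) => -[P].
  by rewrite inE is_pairingE => matchP ->; exists P.
by move=> matchP PE; exists P; rewrite ?inE ?is_pairingE.
Qed.

Theorem proposition4 (N : nat) (hN : 1 <= N) :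
  (* (i) constraints on the ordered pivots *)
  (forall P : {set 'I_(N.*2) * 'I_(N.*2)}, is_pairing P ->
     let s := pivot_seq (pivots P) in
     [/\ size s = N, nth 0 s 0 = 1, nth 0 s N.-1 < N.*2 &
         forall n, 1 <= n <= N -> n <= nth 0 s n.-1 <= n.*2 - 1]) /\
  (* (i) number of possible pivot sets is the Catalan number *)
  #|[set pivots P | P in [set P : {set 'I_(N.*2) * 'I_(N.*2)} | is_pairing P]]|
    = (N.*2)`! %/ (N`! * N.+1`!) /\
  (* (ii) number of pairings with a fixed (possible) pivot set *)
  (forall E : {set 'I_(N.*2)},
     E \in [set pivots P | P in [set P : {set 'I_(N.*2) * 'I_(N.*2)} | is_pairing P]] ->
     #|[set P : {set 'I_(N.*2) * 'I_(N.*2)} | is_pairing P & pivots P == E]|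
       = \prod_(1 <= n < N.+1) (n.*2 - nth 0 (pivot_seq E) n.-1)) /\
  (* (iii) total number of pairings *)
  #|[set P : {set 'I_(N.*2) * 'I_(N.*2)} | is_pairing P]| = dfact (N.*2 - 1).
Proof.
have cardT : #|[set: 'I_(N.*2)]| = N.*2 by rewrite cardsT card_ord.
rewrite pivots_pairings; split; [|split; [|split]].
- move=> P pairP s; have : pivots P \in admissible_sets [set: 'I_(N.*2)] N.
    by rewrite -pivots_pairings; apply/imsetP; exists P; rewrite ?inE.
  rewrite inE => /and3P[_ /eqP cardE adm]; have bounds := pivot_seq_bounds cardE adm.
  have /andP[first_ge first_le] : 1 <= nth 0 s 0 <= 1 := bounds 1 hN.
  have /andP[_ last_le] : N <= nth 0 s N.-1 <= N.*2 - 1 by apply: bounds; rewrite hN leqnn.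
  split; [exact: size_pivot_seq | by apply/eqP; rewrite eqn_leq first_le | lia | exact: bounds].
- by rewrite (card_admissible_sets N cardT) ballot_catalan.
- move=> E; rewrite inE => /and3P[_ /eqP cardE _].
  rewrite -prod_choices_pivot_seq // -(card_matchings_pivots (subsetT E) cardE cardT).
  by apply: eq_card => P; rewrite !inE is_pairingE.
- by rewrite -(card_matchings cardT); apply: eq_card => P; rewrite !inE is_pairingE.
Qed.
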